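(* Let $X,Y$ be nonempty compact Hausdorff spaces, $E\neq\{0_E\}$ a complex locally convex space, and $T:C(X,E)\to C(Y,E)$ a map with $\operatorname{Ran}(TF-TG)\subset\operatorname{Ran}(F-G)$ for all $F,G\in C(X,E)$ and $T(1\otimes 0_E)=1\otimes 0_E$. Then $\tilde T_u=\tilde T_v$ for all $u,v\in E\setminus\{0_E\}$.
   Context: $C(X,E)$ is the vector space of continuous functions $X\to E$; $\operatorname{Ran}(F)=\{F(x):x\in X\}$; $f\otimes u$ denotes $x\mapsto f(x)u$, and $1\otimes 0_E$ is the constant function $0_E$. For $u\in E\setminus\{0_E\}$, $\tilde T_u:C(X)\to C(Y)$ is defined by: $\tilde T_u f$ is the unique function $Y\to\mathbb{C}$ with $T(f\otimes u)(y)=(\tilde T_uf)(y)u$ for all $y\in Y$ (it exists since $\operatorname{Ran}(T(f\otimes u))\subset\operatorname{Ran}(f)u$, and it is continuous). *)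

From Stdlib Require Import Reals.
Open Scope R_scope.

Record Cplx := mkC { Re : R ; Im : R }.
Definition C0 : Cplx := mkC 0 0.
Definition C1 : Cplx := mkC 1 0.
Definition Cadd (a b : Cplx) : Cplx := mkC (Re a + Re b) (Im a + Im b).
Definition Copp (a : Cplx) : Cplx := mkC (- Re a) (- Im a).
Definition Csub (a b : Cplx) : Cplx := Cadd a (Copp b).
Definition Cmul (a b : Cplx) : Cplx :=
  mkC (Re a * Re b - Im a * Im b) (Re a * Im b + Im a * Re b).
Definition Cnorm (a : Cplx) : R := sqrt (Re a * Re a + Im a * Im a).

Record TopSpace := {
  pt :> Type ;
  is_open : (pt -> Prop) -> Prop ;
  open_full : is_open (fun _ => True) ;
  open_inter : forall U V, is_open U -> is_open V ->
                 is_open (fun x => U x /\ V x) ;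
  open_union : forall (I : Type) (U : I -> pt -> Prop),
                 (forall i, is_open (U i)) -> is_open (fun x => exists i, U i x)
}.

Definition top_compact (X : TopSpace) : Prop :=
  forall (I : Type) (U : I -> X -> Prop),
    (forall i, is_open X (U i)) ->
    (forall x, exists i, U i x) ->
    exists l : list I, forall x, exists i, List.In i l /\ U i x.

Definition top_hausdorff (X : TopSpace) : Prop :=
  forall x y : X, x <> y ->
    exists U V, is_open X U /\ is_open X V /\ U x /\ V y /\
                (forall z, U z -> V z -> False).

(* ---------- Complex (Hausdorff) locally convex spaces ----------
   A complex vector space whose topology is induced by a separating
   family of seminorms. *)
Record LCS := {
  vec :> Type ;
  vzero : vec ;
  vadd : vec -> vec -> vec ;
  vopp : vec -> vec ;
  vscal : Cplx -> vec -> vec ;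
  vadd_assoc : forall a b c, vadd a (vadd b c) = vadd (vadd a b) c ;
  vadd_comm : forall a b, vadd a b = vadd b a ;
  vadd_0 : forall a, vadd a vzero = a ;
  vadd_opp : forall a, vadd a (vopp a) = vzero ;
  vscal_assoc : forall s t a, vscal s (vscal t a) = vscal (Cmul s t) a ;
  vscal_1 : forall a, vscal C1 a = a ;
  vscal_distr_v : forall s a b, vscal s (vadd a b) = vadd (vscal s a) (vscal s b) ;
  vscal_distr_s : forall s t a, vscal (Cadd s t) a = vadd (vscal s a) (vscal t a) ;
  sn_index : Type ;
  sn : sn_index -> vec -> R ;
  sn_triangle : forall i a b, sn i (vadd a b) <= sn i a + sn i b ;
  sn_homog : forall i s a, sn i (vscal s a) = Cnorm s * sn i a ;
  sn_separating : forall a, (forall i, sn i a = 0) -> a = vzero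
}.

Arguments vzero {_}.
Arguments vadd {_} _ _.
Arguments vopp {_} _.
Arguments vscal {_} _ _.

Definition vsub {E : LCS} (a b : E) : E := vadd a (vopp b).

Definition cont_C (X : TopSpace) (f : X -> Cplx) : Prop :=
  forall (x : X) (eps : R), 0 < eps ->
    exists U, is_open X U /\ U x /\
      forall x', U x' -> Cnorm (Csub (f x') (f x)) < eps.

(* continuity of X -> E for the locally convex topology of E
   (initial topology of the seminorms) *)
Definition cont_E (X : TopSpace) (E : LCS) (F : X -> E) : Prop :=
  forall (x : X) (i : sn_index E) (eps : R), 0 < eps ->
    exists U, is_open X U /\ U x /\
      forall x', U x' -> sn E i (vsub (F x') (F x)) < eps.

Definition CX (X : TopSpace) := { f : X -> Cplx | cont_C X f }.
Definition CXE (X : TopSpace) (E : LCS) := { F : X -> E | cont_E X E F }.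

Definition Ran {A B : Type} (F : A -> B) : B -> Prop := fun b => exists a, F a = b.

Definition subset {B : Type} (P Q : B -> Prop) : Prop := forall b, P b -> Q b.

(** Fix [y : Y]. Since [T] fixes [0] and shrinks ranges of differences, [(T F)(y)]
    lies in [Ran F] and [(T F)(y) - (T G)(y)] lies in [Ran (F - G)].
    If [u] and [v] are linearly independent, comparing [T (f ⊗ u)] and [T (f ⊗ v)]
    at [y] forces both to take the form [f(x) u], [f(x) v] for a single [x].
    If [v = l u], apply [T] to the functions [(A Re f + B Im f) ⊗ u] for complex
    [A, B]: the coefficient [c(A, B)] of [u] in their images at [y] has increments
    [(A - A') r + (B - B') s] with [r, s] real, which forces [c] to be real-linear
    in [(A, B)]; in particular [c(l, i l) = l c(1, i)]. *)

From Stdlib Require Import Reals Lra Psatz Classical ClassicalEpsilon.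
Open Scope R_scope.

Lemma Cplx_ext (a b : Cplx) : Re a = Re b -> Im a = Im b -> a = b.
Proof. destruct a, b; simpl; intros; subst; reflexivity. Qed.

Definition Ci : Cplx := mkC 0 1.

Definition Cscale (r : R) (z : Cplx) : Cplx := mkC (r * Re z) (r * Im z).

Definition Rlinear_map (A B z : Cplx) : Cplx :=
  Cadd (Cscale (Re z) A) (Cscale (Im z) B).

Definition Cinv (z : Cplx) : Cplx :=
  mkC (Re z / (Re z * Re z + Im z * Im z)) (- Im z / (Re z * Re z + Im z * Im z)).

Lemma Cplx_neq0 (z : Cplx) : z <> C0 -> Re z * Re z + Im z * Im z <> 0.
Proof.
  destruct z as [p q]; simpl; intros Hz H0; apply Hz.
  apply Cplx_ext; simpl; nra.
Qed.

Lemma Cmul_Cinvl (z : Cplx) : z <> C0 -> Cmul (Cinv z) z = C1.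
Proof.
  intro Hz; pose proof (Cplx_neq0 z Hz).
  apply Cplx_ext; unfold C1, Cinv; simpl; field; assumption.
Qed.

Lemma Cnorm_ge0 (z : Cplx) : 0 <= Cnorm z.
Proof. apply sqrt_pos. Qed.

Lemma Cnorm_eq0 (z : Cplx) : Cnorm z = 0 -> z = C0.
Proof.
  unfold Cnorm; intro H; apply sqrt_eq_0 in H; [|nra].
  apply Cplx_ext; simpl; nra.
Qed.

Lemma Rabs_Re_le (z : Cplx) : Rabs (Re z) <= Cnorm z.
Proof. rewrite <- sqrt_Rsqr_abs; apply sqrt_le_1_alt; unfold Rsqr; nra. Qed.

Lemma Rabs_Im_le (z : Cplx) : Rabs (Im z) <= Cnorm z.
Proof. rewrite <- sqrt_Rsqr_abs; apply sqrt_le_1_alt; unfold Rsqr; nra. Qed.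

Lemma Cnorm_le_Re_Im (z : Cplx) : Cnorm z <= Rabs (Re z) + Rabs (Im z).
Proof.
  pose proof (Rabs_pos (Re z)); pose proof (Rabs_pos (Im z)).
  unfold Cnorm; rewrite <- (sqrt_square (Rabs (Re z) + Rabs (Im z))) by lra.
  apply sqrt_le_1_alt.
  assert (Rabs (Re z) * Rabs (Re z) = Re z * Re z) by (rewrite <- Rabs_mult; apply Rabs_right; nra).
  assert (Rabs (Im z) * Rabs (Im z) = Im z * Im z) by (rewrite <- Rabs_mult; apply Rabs_right; nra).
  nra.
Qed.

Lemma Cnorm_Rlinear_map_le (A B z : Cplx) :
  Cnorm (Rlinear_map A B z)
  <= (Rabs (Re A) + Rabs (Im A) + Rabs (Re B) + Rabs (Im B)) * Cnorm z.
Proof.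
  pose proof (Rabs_Re_le z); pose proof (Rabs_Im_le z).
  eapply Rle_trans; [apply Cnorm_le_Re_Im|]; unfold Rlinear_map; simpl.
  eapply Rle_trans; [apply Rplus_le_compat; apply Rabs_triang|].
  rewrite !Rabs_mult.
  pose proof (Rabs_pos (Re A)); pose proof (Rabs_pos (Im A));
  pose proof (Rabs_pos (Re B)); pose proof (Rabs_pos (Im B)); nra.
Qed.

Lemma Rlinear_map_sub (A B z w : Cplx) :
  Csub (Rlinear_map A B z) (Rlinear_map A B w) = Rlinear_map A B (Csub z w).
Proof. apply Cplx_ext; unfold Rlinear_map; simpl; ring. Qed.

Lemma Rlinear_map_subl (A B A' B' z : Cplx) :
  Csub (Rlinear_map A B z) (Rlinear_map A' B' z) = Rlinear_map (Csub A A') (Csub B B') z.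
Proof. apply Cplx_ext; unfold Rlinear_map; simpl; ring. Qed.

Section LCSAlgebra.
Variable E : LCS.
Implicit Types a b c d p q : E.

Lemma vadd_0l a : vadd vzero a = a.
Proof. rewrite vadd_comm; apply vadd_0. Qed.

Lemma vadd_oppl a : vadd (vopp a) a = vzero.
Proof. rewrite vadd_comm; apply vadd_opp. Qed.

Lemma vadd_cancel_r a b c : vadd a c = vadd b c -> a = b.
Proof.
  intro H; rewrite <- (vadd_0 E a), <- (vadd_0 E b), <- (vadd_opp E c), !vadd_assoc, H.
  reflexivity.
Qed.

Lemma vscal_C0 a : vscal C0 a = vzero.
Proof.
  apply (vadd_cancel_r _ _ (vscal C0 a)); rewrite vadd_0l, <- vscal_distr_s.
  f_equal; apply Cplx_ext; simpl; ring.
Qed.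

Lemma vsub_0r a : vsub a vzero = a.
Proof.
  unfold vsub; replace (@vopp E vzero) with (@vzero E); [apply vadd_0|].
  apply (vadd_cancel_r _ _ vzero); rewrite vadd_oppl, vadd_0; reflexivity.
Qed.

Lemma vsubvv a : vsub a a = vzero.
Proof. apply vadd_opp. Qed.

Lemma vsub_eq0 a b : vsub a b = vzero -> a = b.
Proof.
  unfold vsub; intro H; apply (vadd_cancel_r _ _ (vopp b)); rewrite H, vadd_opp.
  reflexivity.
Qed.

Lemma vsub_scal (s t : Cplx) a : vsub (vscal s a) (vscal t a) = vscal (Csub s t) a.
Proof.
  unfold vsub.
  replace (vscal s a) with (vadd (vscal (Csub s t) a) (vscal t a)).
  - rewrite <- vadd_assoc, vadd_opp, vadd_0; reflexivity.
  - rewrite <- vscal_distr_s; f_equal; apply Cplx_ext; simpl; ring.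
Qed.

Lemma vadd_swap4 a b c d : vadd (vadd a b) (vadd c d) = vadd (vadd c b) (vadd a d).
Proof.
  rewrite !vadd_assoc; f_equal.
  rewrite (vadd_comm _ (vadd a b) c), (vadd_comm _ a b), vadd_assoc; reflexivity.
Qed.

Lemma vsub_swap p q p' q' : vsub p q = vsub p' q' -> vsub p p' = vsub q q'.
Proof.
  unfold vsub; intro H; apply (vadd_cancel_r _ _ (vadd p' q)).
  rewrite <- vadd_assoc, (vadd_assoc _ (vopp p') p' q), vadd_oppl, vadd_0l.
  rewrite (vadd_swap4 q (vopp q') p' q), <- H.
  rewrite <- vadd_assoc, (vadd_assoc _ (vopp q) q q), vadd_oppl, vadd_0l.
  reflexivity.
Qed.

Lemma sn_vzero i : sn E i vzero = 0.
Proof.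
  rewrite <- (vscal_C0 vzero), sn_homog; unfold Cnorm, C0; simpl.
  rewrite Rmult_0_l, Rplus_0_l, sqrt_0; ring.
Qed.

Lemma vscal_inj a (s t : Cplx) : a <> vzero -> vscal s a = vscal t a -> s = t.
Proof.
  intros Ha H.
  assert (H0 : vscal (Csub s t) a = vzero) by (rewrite <- vsub_scal, H; apply vsubvv).
  destruct (Req_dec (Cnorm (Csub s t)) 0) as [Hn|Hn].
  - apply Cnorm_eq0 in Hn; injection Hn; intros; apply Cplx_ext; simpl in *; lra.
  - exfalso; apply Ha, sn_separating; intro i.
    pose proof (sn_homog E i (Csub s t) a) as Hs; rewrite H0, sn_vzero in Hs.
    symmetry in Hs; apply Rmult_integral in Hs; tauto.
Qed.

End LCSAlgebra.

Lemma lt_eps_scaled (M N eps : R) :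
  0 <= M -> 0 < eps -> 0 <= N -> N < eps / (M + 1) -> M * N < eps.
Proof.
  intros HM Heps HN HNe.
  assert (Hd : eps / (M + 1) * (M + 1) = eps) by (field; lra).
  nra.
Qed.

Lemma cont_C_Rlinear_map (X : TopSpace) (f : X -> Cplx) (A B : Cplx) :
  cont_C X f -> cont_C X (fun x => Rlinear_map A B (f x)).
Proof.
  intros Hf x eps Heps.
  set (M := Rabs (Re A) + Rabs (Im A) + Rabs (Re B) + Rabs (Im B)).
  assert (HM : 0 <= M).
  { pose proof (Rabs_pos (Re A)); pose proof (Rabs_pos (Im A));
    pose proof (Rabs_pos (Re B)); pose proof (Rabs_pos (Im B)); unfold M; lra. }
  destruct (Hf x (eps / (M + 1))) as [U [HU [Hx Hclose]]].
  { apply Rdiv_lt_0_compat; lra. }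
  exists U; repeat split; try assumption.
  intros x' Hx'; rewrite Rlinear_map_sub.
  eapply Rle_lt_trans; [apply Cnorm_Rlinear_map_le|].
  apply lt_eps_scaled; auto using Cnorm_ge0.
Qed.

Lemma cont_E_scal (X : TopSpace) (E : LCS) (k : X -> Cplx) (w : E) :
  cont_C X k -> cont_E X E (fun x => vscal (k x) w).
Proof.
  intros Hk x i eps Heps.
  set (M := Rabs (sn E i w)).
  assert (HM : 0 <= M) by apply Rabs_pos.
  destruct (Hk x (eps / (M + 1))) as [U [HU [Hx Hclose]]].
  { apply Rdiv_lt_0_compat; lra. }
  exists U; repeat split; try assumption.
  intros x' Hx'; rewrite vsub_scal, sn_homog.
  pose proof (Cnorm_ge0 (Csub (k x') (k x))); pose proof (Rle_abs (sn E i w)).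
  apply (Rle_lt_trans _ (M * Cnorm (Csub (k x') (k x)))); [unfold M; nra|].
  apply lt_eps_scaled; auto.
Qed.

Lemma cont_E_vzero (X : TopSpace) (E : LCS) : cont_E X E (fun _ => vzero).
Proof.
  intros x i eps Heps; exists (fun _ => True).
  repeat split; [apply open_full|]; intros.
  rewrite vsubvv, sn_vzero; lra.
Qed.

Ltac split_cplx H :=
  let H1 := fresh H "_re" in let H2 := fresh H "_im" in
  pose proof (f_equal Re H) as H1; pose proof (f_equal Im H) as H2;
  simpl in H1, H2; clear H.

(* Testing [t] against [0], [1] and [i] shows that the real ratio does not depend on [t]. *)
Lemma real_slope_affine (c : Cplx -> Cplx) :
  (forall t s, exists r, Csub (c t) (c s) = Cscale r (Csub t s)) ->
  exists rho, forall t, c t = Cadd (c C0) (Cscale rho t).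
Proof.
  intro Hc.
  destruct (Hc C1 C0) as [r1 H10]; destruct (Hc Ci C0) as [ri Hi0];
  destruct (Hc Ci C1) as [q Hi1].
  exists r1; intro t.
  destruct (Hc t C0) as [rt Ht0]; destruct (Hc t C1) as [r' Ht1];
  destruct (Hc t Ci) as [r'' Hti].
  split_cplx H10; split_cplx Hi0; split_cplx Hi1;
  split_cplx Ht0; split_cplx Ht1; split_cplx Hti.
  unfold C0, C1, Ci in *; simpl in *; assert (ri = r1) by lra.
  destruct (Req_dec (Im t) 0) as [Him|Him].
  - destruct (Req_dec (Re t) 0) as [Hre|Hre].
    + rewrite Hre, Him in *; apply Cplx_ext; simpl; nra.
    + assert (rt = r1).
      { apply (Rmult_eq_reg_l (Re t)); [|exact Hre]. rewrite Him in *; nra. }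
      subst; apply Cplx_ext; simpl; lra.
  - assert (rt = r').
    { apply (Rmult_eq_reg_l (Im t)); [nra|exact Him]. }
    subst; apply Cplx_ext; simpl; nra.
Qed.

Definition has_Rlinear_increments (c : Cplx -> Cplx -> Cplx) : Prop :=
  forall A B A' B', exists z,
    Csub (c A B) (c A' B') = Rlinear_map (Csub A A') (Csub B B') z.

Section RlinearIncrements.
Variable c : Cplx -> Cplx -> Cplx.
Hypothesis hc : has_Rlinear_increments c.

Lemma Rlinear_increments_affinel (B : Cplx) :
  exists rho, forall A, c A B = Cadd (c C0 B) (Cscale rho A).
Proof.
  apply (real_slope_affine (fun A => c A B)); intros t s.
  destruct (hc t B s B) as [z Hz]; exists (Re z); rewrite Hz.
  apply Cplx_ext; unfold Rlinear_map; simpl; ring.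
Qed.

Lemma Rlinear_increments_affiner (A : Cplx) :
  exists sigma, forall B, c A B = Cadd (c A C0) (Cscale sigma B).
Proof.
  apply (real_slope_affine (fun B => c A B)); intros t s.
  destruct (hc A t A s) as [z Hz]; exists (Im z); rewrite Hz.
  apply Cplx_ext; unfold Rlinear_map; simpl; ring.
Qed.

(* Comparing the two affine expansions of [c] along each axis at [(1, i)] and at
   [(l, i l)] forces the slopes to agree, since [l] and [i l] are
   [R]-linearly independent. *)
Lemma Rlinear_increments_homogeneous (l : Cplx) :
  c C0 C0 = C0 -> l <> C0 -> c l (Cmul Ci l) = Cmul (c C1 Ci) l.
Proof.
  intros Hc00 Hl; pose proof (Cplx_neq0 l Hl) as Hnl.
  destruct (Rlinear_increments_affinel C0) as [rho0 Hrho0].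
  destruct (Rlinear_increments_affinel Ci) as [rhoi Hrhoi].
  destruct (Rlinear_increments_affinel (Cmul Ci l)) as [rhol Hrhol].
  destruct (Rlinear_increments_affiner C0) as [sigma0 Hsigma0].
  destruct (Rlinear_increments_affiner C1) as [sigma1 Hsigma1].
  destruct (Rlinear_increments_affiner l) as [sigmal Hsigmal].
  pose proof (eq_trans (eq_sym (Hrhoi C1)) (Hsigma1 Ci)) as H1i.
  rewrite Hsigma0, (Hrho0 C1), Hc00 in H1i.
  pose proof (eq_trans (eq_sym (Hrhol l)) (Hsigmal (Cmul Ci l))) as Hll.
  rewrite Hsigma0, (Hrho0 l), Hc00 in Hll.
  rewrite (Hrhol l), (Hsigma0 (Cmul Ci l)), (Hrhoi C1), (Hsigma0 Ci), Hc00.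
  split_cplx H1i; split_cplx Hll.
  destruct l as [a b]; unfold C0, C1, Ci in *; simpl in *.
  assert (Hrhoi0 : rhoi = rho0) by lra.
  assert (Hre : (rhol - rho0) * a = (sigma0 - sigmal) * b) by lra.
  assert (Him : (rhol - rho0) * b = (sigmal - sigma0) * a) by lra.
  assert (Hsig : (a * a + b * b) * (sigmal - sigma0) = 0).
  { transitivity (a * ((rhol - rho0) * b) - b * ((rhol - rho0) * a)); [|ring].
    rewrite Hre, Him; ring. }
  apply Rmult_integral in Hsig; destruct Hsig as [Hsig|Hsig]; [contradiction|].
  assert (Hrho : (a * a + b * b) * (rhol - rho0) = 0).
  { transitivity (a * ((rhol - rho0) * a) + b * ((rhol - rho0) * b)); [ring|].
    rewrite Hre, Him; replace sigmal with sigma0 by lra; ring. }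
  apply Rmult_integral in Hrho; destruct Hrho as [Hrho|Hrho]; [contradiction|].
  replace rhol with rho0 by lra; subst rhoi.
  apply Cplx_ext; simpl; ring.
Qed.

End RlinearIncrements.

Lemma Rlinear_map_1i (z : Cplx) : Rlinear_map C1 Ci z = z.
Proof. apply Cplx_ext; unfold Rlinear_map; simpl; ring. Qed.

Lemma Rlinear_map_mul (l z : Cplx) : Rlinear_map l (Cmul Ci l) z = Cmul z l.
Proof. apply Cplx_ext; unfold Rlinear_map; simpl; ring. Qed.

Lemma Rlinear_map_00 (z : Cplx) : Rlinear_map C0 C0 z = C0.
Proof. apply Cplx_ext; unfold Rlinear_map; simpl; ring. Qed.

Definition scal_family (X : TopSpace) (E : LCS) (f : CX X) (u : E) (A B : Cplx)
  : CXE X E :=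
  exist _ (fun x => vscal (Rlinear_map A B (proj1_sig f x)) u)
    (cont_E_scal X E _ u (cont_C_Rlinear_map X _ A B (proj2_sig f))).

Section RangeShrinking.
Variables (X Y : TopSpace) (E : LCS) (T : CXE X E -> CXE Y E).
Hypothesis hRan : forall F G : CXE X E,
  subset (Ran (fun y => vsub (proj1_sig (T F) y) (proj1_sig (T G) y)))
         (Ran (fun x => vsub (proj1_sig F x) (proj1_sig G x))).
Hypothesis hT0 : forall Z : CXE X E, (forall x, proj1_sig Z x = vzero) ->
  forall y, proj1_sig (T Z) y = vzero.

Lemma T_sub_in_range (F G : CXE X E) (y : Y) :
  exists x, vsub (proj1_sig F x) (proj1_sig G x)
            = vsub (proj1_sig (T F) y) (proj1_sig (T G) y).
Proof. exact (hRan F G _ (ex_intro _ y eq_refl)). Qed.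

Lemma T_in_range (F : CXE X E) (y : Y) : exists x, proj1_sig (T F) y = proj1_sig F x.
Proof.
  set (Z := exist _ (fun _ => vzero) (cont_E_vzero X E) : CXE X E).
  destruct (T_sub_in_range F Z y) as [x Hx]; exists x.
  rewrite (hT0 Z) in Hx by reflexivity; simpl in Hx.
  rewrite !vsub_0r in Hx; symmetry; exact Hx.
Qed.

Lemma T_ext (F G : CXE X E) : (forall x, proj1_sig F x = proj1_sig G x) ->
  forall y, proj1_sig (T F) y = proj1_sig (T G) y.
Proof.
  intros HFG y; destruct (T_sub_in_range F G y) as [x Hx].
  rewrite HFG, vsubvv in Hx; apply vsub_eq0; auto.
Qed.

Section ScalarMultiples.
Variables (f : CX X) (u v : E) (Fu Fv : CXE X E) (y : Y).
Hypotheses (hu : u <> vzero)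
  (hFu : forall x, proj1_sig Fu x = vscal (proj1_sig f x) u)
  (hFv : forall x, proj1_sig Fv x = vscal (proj1_sig f x) v).

(* [(T Fu)(y) = f(a) u], [(T Fv)(y) = f(b) v] and their difference is [f(x) (u - v)],
   so [(f(a) - f(x)) u = (f(b) - f(x)) v]; independence forces [f(a) = f(x) = f(b)]. *)
Lemma T_scal_independent : (forall l, v <> vscal l u) ->
  exists c, proj1_sig (T Fu) y = vscal c u /\ proj1_sig (T Fv) y = vscal c v.
Proof.
  intro hind.
  destruct (T_in_range Fu y) as [a Ha]; destruct (T_in_range Fv y) as [b Hb].
  destruct (T_sub_in_range Fu Fv y) as [x Hx].
  rewrite Ha, Hb, !hFu, !hFv in Hx; apply vsub_swap in Hx; rewrite !vsub_scal in Hx.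
  set (fx := proj1_sig f x) in Hx.
  assert (Hb0 : Csub fx (proj1_sig f b) = C0).
  { apply NNPP; intro Hne; apply (hind (Cmul (Cinv (Csub fx (proj1_sig f b)))
                                             (Csub fx (proj1_sig f a)))).
    rewrite <- vscal_assoc, Hx, vscal_assoc, Cmul_Cinvl, vscal_1 by exact Hne.
    reflexivity. }
  assert (Ha0 : Csub fx (proj1_sig f a) = C0).
  { apply (vscal_inj E u); [exact hu|]; rewrite Hx, Hb0, !vscal_C0; reflexivity. }
  exists (proj1_sig f a); split; [rewrite Ha, hFu; reflexivity|].
  rewrite Hb, hFv; f_equal.
  split_cplx Ha0; split_cplx Hb0; apply Cplx_ext; unfold C0 in *; simpl in *; lra.
Qed.

Lemma T_scal_family_coef : exists c : Cplx -> Cplx -> Cplx,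
  has_Rlinear_increments c /\ c C0 C0 = C0 /\
  forall A B, proj1_sig (T (scal_family X E f u A B)) y = vscal (c A B) u.
Proof.
  assert (Hcoef : forall A B, exists c,
             proj1_sig (T (scal_family X E f u A B)) y = vscal c u).
  { intros A B; destruct (T_in_range (scal_family X E f u A B) y) as [x Hx].
    exists (Rlinear_map A B (proj1_sig f x)); exact Hx. }
  set (c := fun A B => proj1_sig (constructive_indefinite_description _ (Hcoef A B))).
  assert (Hc : forall A B, proj1_sig (T (scal_family X E f u A B)) y = vscal (c A B) u)
    by (intros A B; exact (proj2_sig (constructive_indefinite_description _ (Hcoef A B)))).
  exists c; repeat split; [| |exact Hc].
  - intros A B A' B'.
    destruct (T_sub_in_range (scal_family X E f u A B) (scal_family X E f u A' B') y)
      as [x Hx].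
    rewrite !Hc in Hx; simpl in Hx; rewrite !vsub_scal in Hx.
    exists (proj1_sig f x); rewrite <- Rlinear_map_subl.
    symmetry; exact (vscal_inj E u _ _ hu Hx).
  - apply (vscal_inj E u _ _ hu); rewrite <- Hc, vscal_C0; apply hT0.
    intro x; simpl; rewrite Rlinear_map_00; apply vscal_C0.
Qed.

Lemma T_scal_dependent (l : Cplx) : v <> vzero -> v = vscal l u ->
  exists c, proj1_sig (T Fu) y = vscal c u /\ proj1_sig (T Fv) y = vscal c v.
Proof.
  intros hv Hl.
  assert (Hl0 : l <> C0) by (intro H0; apply hv; rewrite Hl, H0; apply vscal_C0).
  destruct T_scal_family_coef as [c [Hinc [Hc00 Hc]]].
  exists (c C1 Ci); split.
  - rewrite (T_ext Fu (scal_family X E f u C1 Ci)), Hc; [reflexivity|].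
    intro x; simpl; rewrite Rlinear_map_1i; apply hFu.
  - rewrite (T_ext Fv (scal_family X E f u l (Cmul Ci l))), Hc.
    + rewrite Rlinear_increments_homogeneous, Hl, vscal_assoc by assumption.
      reflexivity.
    + intro x; simpl; rewrite Rlinear_map_mul, hFv, Hl, vscal_assoc; reflexivity.
Qed.

End ScalarMultiples.

End RangeShrinking.

Theorem lemma4p5
  (X Y : TopSpace) (E : LCS)
  (hXc : top_compact X) (hXh : top_hausdorff X) (hXne : inhabited X)
  (hYc : top_compact Y) (hYh : top_hausdorff Y) (hYne : inhabited Y)
  (hE : exists e : E, e <> vzero)
  (T : CXE X E -> CXE Y E)
  (hRan : forall F G : CXE X E,
      subset (Ran (fun y => vsub (proj1_sig (T F) y) (proj1_sig (T G) y)))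
             (Ran (fun x => vsub (proj1_sig F x) (proj1_sig G x))))
  (hT0 : forall Z : CXE X E, (forall x, proj1_sig Z x = vzero) ->
           forall y, proj1_sig (T Z) y = vzero) :
  forall (u v : E), u <> vzero -> v <> vzero ->
  forall (f : CX X) (Fu Fv : CXE X E),
    (forall x, proj1_sig Fu x = vscal (proj1_sig f x) u) ->
    (forall x, proj1_sig Fv x = vscal (proj1_sig f x) v) ->
    exists g : Y -> Cplx,
      forall y, proj1_sig (T Fu) y = vscal (g y) u /\
                proj1_sig (T Fv) y = vscal (g y) v.
Proof.
  intros u v hu hv f Fu Fv hFu hFv.
  assert (Hpt : forall y, exists c,
             proj1_sig (T Fu) y = vscal c u /\ proj1_sig (T Fv) y = vscal c v).
  { intro y; destruct (classic (exists l, v = vscal l u)) as [[l Hl]|Hind].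
    - exact (T_scal_dependent X Y E T hRan hT0 f u v Fu Fv y hu hFu hFv l hv Hl).
    - apply (T_scal_independent X Y E T hRan hT0 f u v Fu Fv y hu hFu hFv).
      intros l Hl; apply Hind; exists l; exact Hl. }
  exists (fun y => proj1_sig (constructive_indefinite_description _ (Hpt y))).
  intro y; exact (proj2_sig (constructive_indefinite_description _ (Hpt y))).
Qed.
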